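(* Let $k\ge1$ and $\ell\ge0$. Then $$\min\{n\in A_{2k}:\max\mathcal{CG}(n)=\max\mathcal{CG}_2(n)=F_{2k+2\ell}\}>\max\{n\in A_{2k}:\max\mathcal{CG}(n)=\max\mathcal{CG}_1(n)=F_{2k+2\ell}\}.$$
   Context: Fibonacci numbers: $F_1=F_2=1$, $F_{n+1}=F_n+F_{n-1}$ for $n\ge2$. Chung–Graham decomposition: every positive integer $n$ has a unique representation $n=\sum_{i\ge1}c_iF_{2i}$ with $c_i\in\{0,1,2\}$, only finitely many nonzero, such that whenever $c_i=c_j=2$ with $i<j$ there is $k$ with $i<k<j$ and $c_k=0$. Let $\mathcal{CG}(n)$ be the set of $F_{2i}$ with $c_i\neq0$, $\mathcal{CG}_1(n)$ the set of $F_{2i}$ with $c_i=1$, and $\mathcal{CG}_2(n)$ the set of $F_{2i}$ with $c_i=2$. For $k\ge1$, $A_{2k}=\{n\ge1:\min\mathcal{CG}(n)=F_{2k}\}$. *)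

From mathcomp Require Import all_boot.
Set Implicit Arguments. Unset Strict Implicit. Unset Printing Implicit Defensive.

Fixpoint fib (n : nat) : nat :=
  match n with
  | 0 => 0
  | 1 => 1
  | S ((S m) as p) => fib p + fib m
  end.

(* A coefficient sequence c = [:: c_1; c_2; ...; c_L]; cgc c i = c_i for i >= 1
   (and 0 beyond the end of the sequence). *)
Definition cgc (c : seq nat) (i : nat) : nat := nth 0 c i.-1.

Definition is_CG_rep (n : nat) (c : seq nat) : Prop :=
  [/\ (forall i, 1 <= i -> cgc c i <= 2),
      n = \sum_(1 <= i < (size c).+1) cgc c i * fib (2 * i)
    & (forall i j, 1 <= i -> i < j -> cgc c i = 2 -> cgc c j = 2 ->
         exists2 k, i < k < j & cgc c k = 0)].

Definition CG (c : seq nat) (x : nat) : Prop :=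
  exists i, [/\ 1 <= i, cgc c i != 0 & x = fib (2 * i)].
Definition CG1 (c : seq nat) (x : nat) : Prop :=
  exists i, [/\ 1 <= i, cgc c i == 1 & x = fib (2 * i)].
Definition CG2 (c : seq nat) (x : nat) : Prop :=
  exists i, [/\ 1 <= i, cgc c i == 2 & x = fib (2 * i)].

Definition is_min (P : nat -> Prop) (x : nat) : Prop :=
  P x /\ forall y, P y -> x <= y.
Definition is_max (P : nat -> Prop) (x : nat) : Prop :=
  P x /\ forall y, P y -> y <= x.

(* n in A_{2k} with max CG(n) = max CG_2(n) = F_{2k+2l}. *)
Definition S2 (k l n : nat) : Prop :=
  exists c, is_CG_rep n c /\
    [/\ 1 <= n, is_min (CG c) (fib (2 * k)),
        is_max (CG c) (fib (2 * k + 2 * l))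
      & is_max (CG2 c) (fib (2 * k + 2 * l))].

(* n in A_{2k} with max CG(n) = max CG_1(n) = F_{2k+2l}. *)
Definition S1 (k l n : nat) : Prop :=
  exists c, is_CG_rep n c /\
    [/\ 1 <= n, is_min (CG c) (fib (2 * k)),
        is_max (CG c) (fib (2 * k + 2 * l))
      & is_max (CG1 c) (fib (2 * k + 2 * l))].

From mathcomp Require Import all_boot zify.

Set Implicit Arguments.
Unset Strict Implicit.
Unset Printing Implicit Defensive.

(* The largest admissible sum [c_1 F_2 + ... + c_j F_(2j)] is [F_(2j+2) - 1],
   and it drops below [F_(2j+1)] as soon as every 2 is followed by a 0 within
   the range.  Hence an element of [A_(2k)] whose top coefficient, at index
   [K = k + l], is [v] lies in [[v F_(2K), (v + 1) F_(2K))]: elements with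
   top coefficient 1 are below [2 F_(2K)], those with top coefficient 2 are
   not. *)

Lemma fibSS n : fib n.+2 = fib n.+1 + fib n.
Proof. by []. Qed.

Lemma fib_gt0 n : 0 < fib n.+1.
Proof. by elim: n => // n IH; rewrite fibSS ltn_addr. Qed.

Lemma fib_doubleS j : fib (2 * j.+1) = fib (2 * j).+1 + fib (2 * j).
Proof. by rewrite mulnS add2n. Qed.

Lemma ltn_fib_double : {homo (fun i => fib (2 * i)) : i j / i < j}.
Proof.
apply: homo_ltn => [y x z|i]; first exact: ltn_trans.
by rewrite fib_doubleS -[X in X < _]add0n ltn_add2r fib_gt0.
Qed.

Lemma leq_fib_double : {mono (fun i => fib (2 * i)) : i j / i <= j}.
Proof. exact: leq_mono ltn_fib_double. Qed.

Lemma fib_double_inj : injective (fun i => fib (2 * i)).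
Proof. exact: incn_inj leq_fib_double. Qed.

Definition cg_sum (c : seq nat) (j : nat) : nat :=
  \sum_(1 <= i < j.+1) cgc c i * fib (2 * i).

Lemma cg_sumS c j : cg_sum c j.+1 = cg_sum c j + cgc c j.+1 * fib (2 * j.+1).
Proof. by rewrite /cg_sum big_nat_recr. Qed.

Lemma cg_sum_pred c j :
  0 < j -> cg_sum c j = cg_sum c j.-1 + cgc c j * fib (2 * j).
Proof. by case: j => // j _; rewrite cg_sumS. Qed.

Lemma cgc_default c i : size c < i -> cgc c i = 0.
Proof. by case: i => // i; rewrite ltnS => /(nth_default 0). Qed.

Lemma cg_sum_trailing_zeros c j j' :
  (forall i, j < i -> cgc c i = 0) -> j <= j' -> cg_sum c j' = cg_sum c j.
Proof.
move=> cz; elim: j' => [|j' IH]; first by rewrite leqn0 => /eqP->.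
rewrite leq_eqVlt ltnS => /orP[/eqP<- // | lejj'].
by rewrite cg_sumS cz ?ltnS // mul0n addn0 IH.
Qed.

Lemma cg_sum_size c j :
  (forall i, j < i -> cgc c i = 0) -> cg_sum c (size c) = cg_sum c j.
Proof.
move=> cz; case: (leqP j (size c)) => [|/ltnW le_size_j].
  exact: cg_sum_trailing_zeros.
by rewrite (@cg_sum_trailing_zeros c (size c) j) // => i /cgc_default.
Qed.

Section Admissible.

Variable c : seq nat.
Hypothesis cgc_le2 : forall i, 1 <= i -> cgc c i <= 2.
Hypothesis cgc_sep2 : forall i j, 1 <= i -> i < j -> cgc c i = 2 ->
  cgc c j = 2 -> exists2 k, i < k < j & cgc c k = 0.

Definition twos_closed (j : nat) : Prop :=
  forall i, 1 <= i <= j -> cgc c i = 2 -> exists2 z, i < z <= j & cgc c z = 0.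

Lemma twos_closed_pred j : cgc c j.+1 != 0 -> twos_closed j.+1 -> twos_closed j.
Proof.
move=> cj closed i /andP[i1 ij] ci.
have [|z /andP[iz]] := closed i _ ci; first by rewrite i1 (leqW ij).
rewrite leq_eqVlt => /orP[/eqP-> c0 | zj cz]; first by rewrite c0 in cj.
by exists z => //; rewrite iz -ltnS.
Qed.

Lemma twos_closed_two j : cgc c j.+1 = 2 -> twos_closed j.
Proof.
move=> cj i /andP[i1 ij] ci.
have [z /andP[iz zj] cz] := cgc_sep2 i1 (ij : i < j.+1) ci cj.
by exists z; rewrite ?iz.
Qed.

(* The two bounds must be proved simultaneously: a new top coefficient 2
   needs the strong bound below it, which the separation condition supplies. *)
Lemma cg_sum_bounds j :
  cg_sum c j < fib (2 * j).+2 /\ (twos_closed j -> cg_sum c j < fib (2 * j).+1).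
Proof.
elim: j => [|j [IHweak IHstrong]]; first by rewrite /cg_sum big_geq.
rewrite fibSS in IHweak.
have e2 : fib (2 * j.+1).+1 = fib (2 * j.+1) + fib (2 * j).+1.
  by rewrite mulnS add2n.
rewrite cg_sumS fibSS e2 fib_doubleS.
have := cgc_le2 (ltn0Sn j).
case cj: (cgc c j.+1) => [|[|[|//]]] _.
- by split=> [|_]; lia.
- split=> [|/twos_closed_pred]; first lia.
  by rewrite cj => /(_ isT)/IHstrong; lia.
- split=> [|closed]; first by have := IHstrong (twos_closed_two cj); lia.
  by have [|z /andP[jz zj] _] := closed j.+1 _ cj; [rewrite leqnn | lia].
Qed.

Lemma cg_sum_pred_lt j : 0 < j -> cg_sum c j.-1 < fib (2 * j).
Proof. by case: j => // j _; rewrite fib_doubleS -fibSS; case: (cg_sum_bounds j). Qed.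

End Admissible.

Definition CGv (v : nat) (c : seq nat) (x : nat) : Prop :=
  exists i, [/\ 1 <= i, cgc c i == v & x = fib (2 * i)].

(* [S1] and [S2] are [Sv 1] and [Sv 2] up to conversion. *)
Definition Sv (v k l n : nat) : Prop :=
  exists c, is_CG_rep n c /\
    [/\ 1 <= n, is_min (CG c) (fib (2 * k)),
        is_max (CG c) (fib (2 * k + 2 * l))
      & is_max (CGv v c) (fib (2 * k + 2 * l))].

Lemma max_CG_coef c v K : v != 0 ->
  is_max (CG c) (fib (2 * K)) -> CGv v c (fib (2 * K)) ->
  cgc c K = v /\ forall i, K < i -> cgc c i = 0.
Proof.
move=> v0 [_ CG_le] [i [i1 /eqP ci /fib_double_inj eiK]]; subst i.
split=> // i Ki; apply/eqP; apply: contraTT (Ki) => ci0.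
rewrite -leqNgt -leq_fib_double; apply: CG_le.
by exists i; split=> //; apply: leq_ltn_trans Ki.
Qed.

Lemma Sv_bounds v k l n : v != 0 -> 0 < k + l -> Sv v k l n ->
  v * fib (2 * (k + l)) <= n < v.+1 * fib (2 * (k + l)).
Proof.
move=> v0 Kgt0 [c [[c_le2 -> c_sep2] [_ _ maxCG [CGv_top _]]]].
rewrite -mulnDr in maxCG CGv_top.
have [cK cz] := max_CG_coef v0 maxCG CGv_top.
have lt_low := cg_sum_pred_lt c_le2 c_sep2 Kgt0.
rewrite -/(cg_sum c (size c)) (cg_sum_size cz) cg_sum_pred // cK.
by rewrite mulSn leq_addl ltn_add2r.
Qed.

Lemma cgc_mkseq (f : nat -> nat) L i :
  0 < i -> cgc (mkseq (fun j => f j.+1) L) i = if i <= L then f i else 0.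
Proof.
case: i => // i _; rewrite /cgc /=.
by case: ltnP => iL; [rewrite nth_mkseq | rewrite nth_default ?size_mkseq].
Qed.

Section Witness.

Variables k l v : nat.
Hypotheses (k_gt0 : 0 < k) (v_gt0 : 0 < v) (v_le2 : v <= 2).

Definition cg_witness_coef (i : nat) : nat :=
  if i == k + l then v else if i == k then 1 else 0.

Definition cg_witness : seq nat :=
  mkseq (fun j => cg_witness_coef j.+1) (k + l).

Lemma cgc_witness i : 0 < i -> cgc cg_witness i = cg_witness_coef i.
Proof.
move=> i_gt0; rewrite cgc_mkseq //; case: leqP => // Ki.
have ki : k < i := leq_ltn_trans (leq_addr l k) Ki.
by rewrite /cg_witness_coef !gtn_eqF.
Qed.

Lemma cg_witness_support i :
  cg_witness_coef i != 0 -> (i == k + l) || (i == k).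
Proof. by rewrite /cg_witness_coef; case: (i =P k + l) => //; case: (i =P k). Qed.

Lemma cg_witness_two i : cg_witness_coef i = 2 -> i = k + l.
Proof.
by rewrite /cg_witness_coef; case: (i =P k + l) => // _; case: (i =P k).
Qed.

Lemma cg_witness_rep : is_CG_rep (cg_sum cg_witness (k + l)) cg_witness.
Proof.
split.
- move=> i /cgc_witness->; rewrite /cg_witness_coef.
  by case: (i =P k + l) => // _; case: (i =P k).
- by rewrite size_mkseq.
- move=> i j i1 ij; rewrite !cgc_witness ?(leq_trans i1 (ltnW ij)) //.
  move=> /cg_witness_two ei /cg_witness_two ej.
  by move: ij; rewrite ei ej ltnn.
Qed.

Lemma Sv_witness : Sv v k l (cg_sum cg_witness (k + l)).
Proof.
have K_gt0 : 0 < k + l by rewrite addn_gt0 k_gt0.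
have coef_top : cgc cg_witness (k + l) = v.
  by rewrite cgc_witness // /cg_witness_coef eqxx.
have CG_range i : 0 < i -> cgc cg_witness i != 0 -> k <= i <= k + l.
  move=> i_gt0; rewrite cgc_witness // => /cg_witness_support.
  by case/orP=> /eqP->; rewrite ?leq_addr ?leqnn.
exists cg_witness; split; first exact: cg_witness_rep.
rewrite -mulnDr; split.
- rewrite cg_sum_pred // coef_top addn_gt0 muln_gt0 v_gt0.
  by rewrite (ltn_fib_double K_gt0) orbT.
- split=> [|_ [i [i_gt0 ci ->]]].
    exists k; split=> //; rewrite cgc_witness // /cg_witness_coef eqxx.
    by case: ifP; rewrite // -lt0n.
  by rewrite leq_fib_double; have /andP[] := CG_range i i_gt0 ci.
- split=> [|_ [i [i_gt0 ci ->]]]; first by exists (k + l); rewrite coef_top -lt0n.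
  by rewrite leq_fib_double; have /andP[] := CG_range i i_gt0 ci.
- split=> [|_ [i [i_gt0 /eqP ci ->]]]; first by exists (k + l); rewrite coef_top.
  have ci0 : cgc cg_witness i != 0 by rewrite ci -lt0n.
  by rewrite leq_fib_double; have /andP[] := CG_range i i_gt0 ci0.
Qed.

End Witness.

Theorem lemma3p5 (k l : nat) : 1 <= k ->
  [/\ (exists n, S2 k l n), (exists m, S1 k l m)
    & forall n m, S2 k l n -> S1 k l m -> m < n].
Proof.
move=> k_gt0; have K_gt0 : 0 < k + l by rewrite addn_gt0 k_gt0.
split; first by exists (cg_sum (cg_witness k l 2) (k + l)); apply: Sv_witness.
  by exists (cg_sum (cg_witness k l 1) (k + l)); apply: Sv_witness.
move=> n m S2n S1m.
have /andP[two_le_n _] := Sv_bounds (isT : 2 != 0) K_gt0 S2n.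
have /andP[_ m_lt_two] := Sv_bounds (isT : 1 != 0) K_gt0 S1m.
exact: leq_trans m_lt_two two_le_n.
Qed.
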